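(* Let $H$ be local $\delta$-admissible on a set $T\subset(-\infty,t_G)$, where $t_G\in\{0,\infty\}$. Then for any $\varepsilon>0$ there exist $\eta>0$ and $t_0<t_G$ such that for all $t\in T$ with $t>t_0$ and all real $\theta$ with $|\theta|\le\frac{\eta}{2}\delta(t)$, \[ (1-\varepsilon)B(t)|\theta|\le|A(t+i\theta)-A(t)|\le(1+\varepsilon)B(t)|\theta|, \] and \[ \frac{1-\varepsilon}{2}\theta^2B(t)\le\int_0^\theta\mathrm{Im}\left[A(t+i\varphi)\right]d\varphi\le\frac{1+\varepsilon}{2}\theta^2B(t). \]
   Context: Let $G(z)=\sum_{n\ge0}a_n^2z^n$ with $a_n\ge0$, infinitely many non-zero, and radius of convergence $R_G\in\{1,\infty\}$; $t_G=\log R_G$. Put $H(z)=G(e^z)$, $A(z)=H'(z)/H(z)$, $B(z)=A'(z)$. $H$ is local $\delta$-admissible on $T\subset(-\infty,t_G)$ if there is a function $\delta:[-\infty,t_G)\to(0,\pi)$ (with $t+\delta(t)<t_G$) such that for every $\varepsilon>0$ there exist $\eta>0$ and $t_0(\varepsilon)$ such that for all $t\in T\cap(t_0(\varepsilon),t_G)$ and all complex $\tau$ with $|\tau|\le\eta\delta(t)$, \[ \log\frac{H(t+\tau)}{H(t)}=\tau A(t)+\tfrac12\tau^2B(t)+h_t(\tau),\qquad |h_t(\tau)|\le\varepsilon|\tau|^2B(t), \] where the logarithm is the branch analytic in $\tau$ and vanishing at $\tau=0$. *)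

From Stdlib Require Import Reals.
From Coquelicot Require Import Coquelicot.
Open Scope R_scope.

Definition cexp (z : C) : C := (exp (Re z) * cos (Im z), exp (Re z) * sin (Im z)).

Definition Gser (a : nat -> R) (z : C) : C :=
  @lim (CompleteNormedModule.CompleteSpace _ C_CompleteNormedModule)
    (filtermap (fun N => sum_n (fun k => Cmult (RtoC (a k ^ 2)) (pow_n z k)) N) eventually).

Definition Hfun (a : nat -> R) (z : C) : C := Gser a (cexp z).
Definition Afun (a : nat -> R) (z : C) : C := Cdiv (C_derive (Hfun a) z) (Hfun a z).
Definition Bfun (a : nat -> R) (z : C) : C := C_derive (Afun a) z.

(* standing assumptions on the coefficient sequence a and t_G = log R_G *)
Definition std_hyp (a : nat -> R) (tG : Rbar) : Prop :=
  (forall n, 0 <= a n) /\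
  (forall N, exists n, (N <= n)%nat /\ a n <> 0) /\
  ((CV_radius (fun n => a n ^ 2) = Finite 1 /\ tG = Finite 0) \/
   (CV_radius (fun n => a n ^ 2) = p_infty /\ tG = p_infty)).

Definition local_delta_admissible (a : nat -> R) (tG : Rbar) (T : R -> Prop)
    (delta : R -> R) : Prop :=
  (forall t : R, Rbar_lt (Finite t) tG -> 0 < delta t < PI /\ Rbar_lt (Finite (t + delta t)) tG) /\
  forall eps, 0 < eps ->
    exists eta, 0 < eta /\
    exists t0 : R, Rbar_lt (Finite t0) tG /\
    forall t : R, T t -> t0 < t -> Rbar_lt (Finite t) tG ->
      exists L : C -> C,
        L (RtoC 0) = RtoC 0 /\
        forall tau : C, Cmod tau <= eta * delta t ->
          ex_derive L tau /\
          cexp (L tau) = Cdiv (Hfun a (Cplus (RtoC t) tau)) (Hfun a (RtoC t)) /\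
          Cmod (L tau - (tau * Afun a (RtoC t) + / 2 * (tau * tau) * Bfun a (RtoC t)))%C
            <= eps * (Cmod tau ^ 2) * Re (Bfun a (RtoC t)).

From Stdlib Require Import Reals Lra.
From Coquelicot Require Import Coquelicot.
Open Scope R_scope.

(* The admissibility hypothesis gives, for large t, a logarithm L(tau) of H(t + tau) / H(t)
   on a disc |tau| <= r whose remainder h(tau) = L(tau) - tau A(t) - tau^2 B(t) / 2 satisfies
   |h(tau)| <= eps |tau|^2 B(t).  Differentiating e^L = H(t + .) / H(t) gives L' = A(t + .), so
   h'(tau) = A(t + tau) - A(t) - tau B(t).  The Cauchy estimate on the circle of radius |theta|
   around i theta turns the bound on h into |h'(i theta)| <= 8 eps |theta| B(t), and B(t) is real
   and nonnegative, so |i theta B(t)| = |theta| B(t): this is the first pair of inequalities.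
   For the second, A(t) and B(t) are real, so the integral of Im A(t + i phi) over [0, theta]
   equals - Re L(i theta) = theta^2 B(t) / 2 - Re h(i theta).
   The Cauchy estimate comes from the mean value property of the real part of a holomorphic
   function, proved by showing that its integral over circles has zero derivative in the radius. *)

Lemma Cmod_le_Re_Im (z : C) : Cmod z <= Rabs (Re z) + Rabs (Im z).
Proof.
  destruct z as [x y]. unfold Cmod, Re, Im; simpl.
  pose proof (Rabs_pos x); pose proof (Rabs_pos y).
  apply Rsqr_incr_0_var; [|lra].
  rewrite Rsqr_sqrt by nra. unfold Rsqr.
  pose proof (pow2_abs x); pose proof (pow2_abs y). nra.
Qed.

Lemma im_le_Cmod (z : C) : Rabs (Im z) <= Cmod z.
Proof. eapply Rle_trans; [apply Rmax_r | apply (Rmax_Cmod z)]. Qed.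

Lemma re_minus (u v : C) : Re (u - v) = Re u - Re v.
Proof. destruct u, v; unfold Re; simpl; ring. Qed.

Lemma im_minus (u v : C) : Im (u - v) = Im u - Im v.
Proof. destruct u, v; unfold Im; simpl; ring. Qed.

Lemma Cmod_Ci_mult (x : R) : Cmod (Ci * x) = Rabs x.
Proof. rewrite Cmod_mult, Cmod_Ci, Cmod_R. ring. Qed.

Lemma Cmod_sub_le (u v : C) : Cmod u - Cmod v <= Cmod (u - v).
Proof.
  pose proof (Cmod_triangle (u - v) v). replace (u - v + v)%C with u in H by ring. lra.
Qed.

Lemma Cmod_real_nonneg (z : C) : Im z = 0 -> 0 <= Re z -> Cmod z = Re z.
Proof.
  destruct z as [x y]. unfold Im, Re; simpl. intros -> Hx.
  change (Cmod (RtoC x) = x). rewrite Cmod_R. apply Rabs_right; lra.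
Qed.

Lemma Cmod_sub_diag (z : C) : Cmod (z - z) = 0.
Proof. replace (z - z)%C with (RtoC 0) by ring. apply Cmod_0. Qed.

Lemma Rbar_lt_between (x : R) (y : Rbar) : Rbar_lt x y -> exists z : R, x < z /\ Rbar_lt z y.
Proof.
  destruct y as [y| |]; simpl; intros H.
  - exists ((x + y) / 2). split; lra.
  - exists (x + 1). split; [lra | exact I].
  - contradiction.
Qed.

Lemma cexp_plus (x y : C) : cexp (x + y) = (cexp x * cexp y)%C.
Proof.
  destruct x as [a b], y as [c d]. unfold cexp, Cmult, Cplus, Re, Im; simpl.
  rewrite exp_plus, cos_plus, sin_plus. f_equal; ring.
Qed.

Lemma cexp_0 : cexp 0 = 1%C.
Proof. unfold cexp, Re, Im; simpl. rewrite exp_0, cos_0, sin_0. unfold RtoC. f_equal; ring. Qed.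

Lemma Cmod_cexp (z : C) : Cmod (cexp z) = exp (Re z).
Proof.
  destruct z as [a b]. unfold cexp, Cmod, Re, Im; simpl.
  assert (Hsc : sin b ^ 2 + cos b ^ 2 = 1) by (rewrite <- (sin2_cos2 b); unfold Rsqr; ring).
  replace ((exp a * cos b) * ((exp a * cos b) * 1) + (exp a * sin b) * ((exp a * sin b) * 1))
    with (exp a ^ 2 * (sin b ^ 2 + cos b ^ 2)) by ring.
  rewrite Hsc, Rmult_1_r. apply sqrt_pow2. pose proof (exp_pos a); lra.
Qed.

Lemma cexp_neq_0 (z : C) : cexp z <> 0%C.
Proof.
  intro E. pose proof (Cmod_cexp z) as H. rewrite E, Cmod_0 in H.
  pose proof (exp_pos (Re z)). lra.
Qed.

Lemma pow_n_cexp (z : C) (n : nat) : pow_n (cexp z) n = cexp (INR n * z).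
Proof.
  induction n as [|n IH].
  - simpl. replace (RtoC 0 * z)%C with (RtoC 0) by ring. now rewrite cexp_0.
  - change (cexp z * pow_n (cexp z) n = cexp (INR (S n) * z))%C.
    rewrite IH, <- cexp_plus, S_INR, RtoC_plus. f_equal. ring.
Qed.

Lemma exp_pow (x : R) (n : nat) : exp x ^ n = exp (INR n * x).
Proof.
  induction n as [|n IH]; [simpl; rewrite Rmult_0_l, exp_0; reflexivity |].
  rewrite S_INR. simpl. rewrite IH, <- exp_plus. f_equal. ring.
Qed.

Lemma exp_le_compat (x y : R) : x <= y -> exp x <= exp y.
Proof. intros [H|H]; [left; apply exp_increasing; auto | subst; lra]. Qed.

Lemma MVT_abs_le (f f' : R -> R) (x K : R) :
  (forall c, derivable_pt_lim f c (f' c)) ->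
  (forall c, Rabs c <= Rabs x -> Rabs (f' c) <= K) ->
  Rabs (f x - f 0) <= K * Rabs x.
Proof.
  intros Hd Hb.
  destruct (MVT_abs f f' 0 x) as [c [Hc Hc2]]; [intros c _; apply Hd |].
  rewrite Hc, Rminus_0_r. apply Rmult_le_compat_r; [apply Rabs_pos |].
  apply Hb. unfold Rmin, Rmax in Hc2. destruct (Rle_dec 0 x).
  - rewrite !Rabs_right; lra.
  - rewrite !Rabs_left1; lra.
Qed.

Lemma exp_sub_1_bound (x : R) : Rabs (exp x - 1) <= Rabs x * exp (Rabs x).
Proof.
  rewrite <- exp_0 at 1. rewrite Rmult_comm.
  apply (MVT_abs_le exp exp x); [intros; apply derivable_pt_lim_exp |].
  intros c Hc. rewrite Rabs_right by (left; apply exp_pos).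
  apply exp_le_compat. pose proof (Rle_abs c). lra.
Qed.

Lemma exp_taylor1_bound (x : R) : Rabs (exp x - 1 - x) <= x ^ 2 * exp (Rabs x).
Proof.
  replace (exp x - 1 - x) with ((fun y => exp y - y) x - (fun y => exp y - y) 0)
    by (simpl; rewrite exp_0; ring).
  replace (x ^ 2 * exp (Rabs x)) with ((Rabs x * exp (Rabs x)) * Rabs x)
    by (rewrite <- pow2_abs; ring).
  apply (MVT_abs_le (fun y => exp y - y) (fun y => exp y - 1) x).
  - intros c. apply derivable_pt_lim_minus; [apply derivable_pt_lim_exp | apply derivable_pt_lim_id].
  - intros c Hc. eapply Rle_trans; [apply exp_sub_1_bound |].
    apply Rmult_le_compat; auto using Rabs_pos; [left; apply exp_pos | apply exp_le_compat; auto].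
Qed.

Lemma sin_lipschitz (v t : R) : Rabs (sin v - sin t) <= Rabs (v - t).
Proof.
  destruct (MVT_abs sin cos t v) as [c [Hc _]]; [intros; apply derivable_pt_lim_sin |].
  rewrite Hc. rewrite <- (Rmult_1_l (Rabs (v - t))) at 2.
  apply Rmult_le_compat_r; [apply Rabs_pos |]. pose proof (COS_bound c). apply Rabs_le; lra.
Qed.

Lemma cos_lipschitz (v t : R) : Rabs (cos v - cos t) <= Rabs (v - t).
Proof.
  destruct (MVT_abs cos (fun y => - sin y) t v) as [c [Hc _]]; [intros; apply derivable_pt_lim_cos |].
  rewrite Hc, Rabs_Ropp. rewrite <- (Rmult_1_l (Rabs (v - t))) at 2.
  apply Rmult_le_compat_r; [apply Rabs_pos |]. pose proof (SIN_bound c). apply Rabs_le; lra.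
Qed.

Lemma cos_sub_1_bound (x : R) : Rabs (cos x - 1) <= x ^ 2.
Proof.
  rewrite <- cos_0 at 1. rewrite <- pow2_abs. replace (Rabs x ^ 2) with (Rabs x * Rabs x) by ring.
  apply (MVT_abs_le cos (fun y => - sin y) x); [intros; apply derivable_pt_lim_cos |].
  intros c Hc. rewrite Rabs_Ropp.
  pose proof (sin_lipschitz c 0) as Hs. rewrite sin_0, !Rminus_0_r in Hs. lra.
Qed.

Lemma sin_taylor1_bound (x : R) : Rabs (sin x - x) <= 2 * x ^ 2.
Proof.
  rewrite <- (pow2_abs x). pose proof (Rabs_pos x).
  destruct (Rle_dec (Rabs x) 1).
  - replace (sin x - x) with ((fun y => sin y - y) x - (fun y => sin y - y) 0)
      by (simpl; rewrite sin_0; ring).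
    eapply Rle_trans.
    + apply (MVT_abs_le (fun y => sin y - y) (fun y => cos y - 1) x (x ^ 2)).
      * intros c. apply derivable_pt_lim_minus; [apply derivable_pt_lim_sin | apply derivable_pt_lim_id].
      * intros c Hc. eapply Rle_trans; [apply cos_sub_1_bound |].
        rewrite <- (pow2_abs c), <- (pow2_abs x). pose proof (Rabs_pos c). nra.
    + rewrite <- (pow2_abs x). nra.
  - eapply Rle_trans; [apply Rabs_triang |]. rewrite Rabs_Ropp.
    pose proof (SIN_bound x). assert (Rabs (sin x) <= 1) by (apply Rabs_le; lra). nra.
Qed.

Lemma cexp_taylor1_bound (u : C) : Cmod (cexp u - 1 - u) <= 4 * Cmod u ^ 2 * exp (Cmod u).
Proof.
  destruct u as [a b].
  assert (Ha : Rabs a <= Cmod (a, b)) by apply (re_le_Cmod (a, b)).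
  assert (Hb : Rabs b <= Cmod (a, b)) by apply (im_le_Cmod (a, b)).
  assert (Hm : Cmod (a, b) ^ 2 = a ^ 2 + b ^ 2) by apply Cmod2_alt.
  assert (Ea : exp a <= exp (Rabs a)) by apply exp_le_compat, Rle_abs.
  assert (E1 : 1 <= exp (Rabs a)) by (rewrite <- exp_0; apply exp_le_compat, Rabs_pos).
  assert (Eu : exp (Rabs a) <= exp (Cmod (a, b))) by (apply exp_le_compat; auto).
  pose proof (exp_pos a). pose proof (Rabs_pos a). pose proof (Rabs_pos b).
  pose proof (exp_taylor1_bound a). pose proof (exp_sub_1_bound a).
  pose proof (cos_sub_1_bound b). pose proof (sin_taylor1_bound b).
  pose proof (sin_lipschitz b 0) as Hsin. rewrite sin_0, !Rminus_0_r in Hsin.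
  pose proof (Rabs_pos (sin b)). pose proof (Rabs_pos (exp a - 1)).
  assert (Hre : Rabs (Re (cexp (a, b) - 1 - (a, b))) <= (a ^ 2 + b ^ 2) * exp (Rabs a)).
  { replace (Re _) with ((exp a - 1 - a) + exp a * (cos b - 1)) by (unfold cexp, Re, Im; simpl; ring).
    eapply Rle_trans; [apply Rabs_triang |]. rewrite Rabs_mult, (Rabs_right (exp a)) by lra.
    assert (exp a * Rabs (cos b - 1) <= exp (Rabs a) * b ^ 2)
      by (apply Rmult_le_compat; auto; pose proof (Rabs_pos (cos b - 1)); lra).
    lra. }
  assert (Him : Rabs (Im (cexp (a, b) - 1 - (a, b))) <= 3 * (a ^ 2 + b ^ 2) * exp (Rabs a)).
  { replace (Im _) with ((exp a - 1) * sin b + (sin b - b)) by (unfold cexp, Re, Im; simpl; ring).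
    eapply Rle_trans; [apply Rabs_triang |]. rewrite Rabs_mult.
    assert (Rabs (exp a - 1) * Rabs (sin b) <= Rabs a * exp (Rabs a) * Rabs b)
      by (apply Rmult_le_compat; auto).
    assert (Rabs a * Rabs b <= a ^ 2 + b ^ 2) by (rewrite <- (pow2_abs a), <- (pow2_abs b); nra).
    assert (0 <= b ^ 2) by nra. nra. }
  eapply Rle_trans; [apply Cmod_le_Re_Im |]. rewrite Hm.
  assert (0 <= a ^ 2 + b ^ 2) by nra.
  assert ((a ^ 2 + b ^ 2) * exp (Rabs a) <= (a ^ 2 + b ^ 2) * exp (Cmod (a, b)))
    by (apply Rmult_le_compat_l; auto).
  lra.
Qed.

(** * Complex differentiability *)

(* Coquelicot's [C_NormedModule] carries the product uniform structure, while
   [AbsRing_NormedModule C_AbsRing] uses [Cmod]-balls; the two derivatives agree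
   ([CDer_is_derive]) and the second one has the algebraic rules. *)
Definition CDer (f : C -> C) (z l : C) : Prop :=
  @is_derive C_AbsRing (AbsRing_NormedModule C_AbsRing) f z l.

Lemma CDer_is_derive (f : C -> C) (z l : C) :
  CDer f z l <-> @is_derive C_AbsRing C_NormedModule f z l.
Proof.
  split; intros [_ H]; (split; [apply is_linear_scal_l |]); intros x Hx eps; exact (H x Hx eps).
Qed.

Lemma CDer_remainder (f : C -> C) (z l : C) : CDer f z l ->
  forall eps, 0 < eps -> exists del, 0 < del /\
    forall w, Cmod w < del -> Cmod (f (z + w) - f z - l * w)%C <= eps * Cmod w.
Proof.
  intros [_ Hd] eps Heps.
  destruct (Hd z (fun P H => H) (mkposreal eps Heps)) as [[d Hdp] Hdw].
  exists d. split; [lra |]. intros w Hw.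
  assert (Hb : Cmod (z + w - z)%C < d) by (replace (z + w - z)%C with w by ring; lra).
  specialize (Hdw (z + w)%C Hb). simpl in Hdw.
  change (norm ?x) with (Cmod x) in Hdw. unfold minus, plus, opp, scal in Hdw; simpl in Hdw.
  change (mult ?x ?y) with (Cmult x y) in Hdw.
  replace (z + w + - z)%C with w in Hdw by ring.
  replace (f (z + w)%C + - f z + - (w * l))%C with (f (z + w) - f z - l * w)%C in Hdw by ring.
  exact Hdw.
Qed.

Lemma CDer_of_remainder (f : C -> C) (z l : C) :
  (forall eps, 0 < eps -> exists del, 0 < del /\
     forall w, Cmod w < del -> Cmod (f (z + w) - f z - l * w)%C <= eps * Cmod w) ->
  CDer f z l.
Proof.
  intros Hc. split; [apply is_linear_scal_l |].
  intros x Hx. apply (@is_filter_lim_locally_unique C_AbsRing (AbsRing_NormedModule C_AbsRing)) in Hx.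
  subst x. intros [eps Heps]. destruct (Hc eps Heps) as [d [Hd Hw]].
  exists (mkposreal d Hd). intros y Hy. simpl in Hy |- *.
  change (UniformSpace.sort (AbsRing_UniformSpace C_AbsRing)) with C in *.
  change (Cmod (y - z)%C < d) in Hy.
  specialize (Hw (y - z)%C Hy). replace (z + (y - z))%C with y in Hw by ring.
  change (norm ?x) with (Cmod x). unfold minus, plus, opp, scal; simpl.
  change (mult ?x ?y) with (Cmult x y).
  replace (f y + - f z + - ((y + - z) * l))%C with (f y - f z - l * (y - z))%C by ring.
  exact Hw.
Qed.

Lemma CDer_of_quadratic_remainder (f : C -> C) (z l : C) (d K : R) : 0 < d ->
  (forall w, Cmod w < d -> Cmod (f (z + w) - f z - l * w)%C <= K * Cmod w ^ 2) ->
  CDer f z l.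
Proof.
  intros Hd H. apply CDer_of_remainder. intros eps Heps.
  pose proof (Rabs_pos K). pose proof (Rle_abs K).
  exists (Rmin d (eps / (Rabs K + 1))).
  split; [apply Rmin_pos; [lra | apply Rdiv_lt_0_compat; lra] |].
  intros w Hw. pose proof (Cmod_ge_0 w).
  assert (Hwd : Cmod w < d) by (eapply Rlt_le_trans; [exact Hw | apply Rmin_l]).
  assert (Hwe : Cmod w * (Rabs K + 1) <= eps).
  { apply Rle_trans with (eps / (Rabs K + 1) * (Rabs K + 1)); [| right; field; lra].
    apply Rmult_le_compat_r; [lra |]. left. eapply Rlt_le_trans; [exact Hw | apply Rmin_r]. }
  eapply Rle_trans; [apply H, Hwd |]. nra.
Qed.

Lemma CDer_plus f g z a b :
  CDer f z a -> CDer g z b -> CDer (fun x => f x + g x)%C z (a + b)%C.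
Proof. apply (@is_derive_plus C_AbsRing (AbsRing_NormedModule C_AbsRing)). Qed.

Lemma CDer_minus f g z a b :
  CDer f z a -> CDer g z b -> CDer (fun x => f x - g x)%C z (a - b)%C.
Proof. apply (@is_derive_minus C_AbsRing (AbsRing_NormedModule C_AbsRing)). Qed.

Lemma CDer_mult f g z a b :
  CDer f z a -> CDer g z b -> CDer (fun x => f x * g x)%C z (a * g z + f z * b)%C.
Proof. intros Hf Hg. apply (is_derive_mult f g z a b Hf Hg). intros; apply Cmult_comm. Qed.

Lemma CDer_const (c z : C) : CDer (fun _ => c) z 0%C.
Proof. apply (@is_derive_const C_AbsRing (AbsRing_NormedModule C_AbsRing)). Qed.

Lemma CDer_id (z : C) : CDer (fun x => x) z 1%C.
Proof. apply (is_derive_id z). Qed.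

Lemma CDer_comp f g z a b :
  CDer f (g z) a -> CDer g z b -> CDer (fun x => f (g x)) z (b * a)%C.
Proof. apply (@is_derive_comp C_AbsRing (AbsRing_NormedModule C_AbsRing)). Qed.

Lemma CDer_scal (c z : C) : CDer (fun u => c * u)%C z c.
Proof.
  pose proof (CDer_mult (fun _ => c) (fun u => u) z 0 1 (CDer_const c z) (CDer_id z)) as H.
  cbv beta in H. replace (0 * z + c * 1)%C with c in H by ring. exact H.
Qed.

Lemma CDer_ext_loc (f g : C -> C) (z l : C) (d : R) : 0 < d ->
  (forall w, Cmod (w - z) < d -> f w = g w) -> CDer f z l -> CDer g z l.
Proof.
  intros Hd H. apply (@is_derive_ext_loc C_AbsRing (AbsRing_NormedModule C_AbsRing)).
  exists (mkposreal d Hd). intros y Hy. apply H. exact Hy.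
Qed.

Lemma CDer_unique f z l1 l2 : CDer f z l1 -> CDer f z l2 -> l1 = l2.
Proof.
  intros H1%CDer_is_derive H2%CDer_is_derive.
  apply is_C_derive_unique in H1, H2. congruence.
Qed.

Lemma CDer_cexp (z : C) : CDer cexp z (cexp z).
Proof.
  apply (CDer_of_quadratic_remainder _ _ _ 1 (4 * exp (Re z) * exp 1)); [lra |].
  intros w Hw.
  replace (cexp (z + w) - cexp z - cexp z * w)%C with (cexp z * (cexp w - 1 - w))%C
    by (rewrite cexp_plus; ring).
  rewrite Cmod_mult, Cmod_cexp. pose proof (cexp_taylor1_bound w). pose proof (exp_pos (Re z)).
  assert (exp (Cmod w) <= exp 1) by (apply exp_le_compat; lra).
  assert (0 <= Cmod w ^ 2) by (apply pow2_ge_0).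
  assert (4 * Cmod w ^ 2 * exp (Cmod w) <= 4 * Cmod w ^ 2 * exp 1) by (apply Rmult_le_compat_l; lra).
  apply Rle_trans with (exp (Re z) * (4 * Cmod w ^ 2 * exp 1)); [| right; ring].
  apply Rmult_le_compat_l; lra.
Qed.

Lemma CDer_Cinv (z : C) : z <> 0%C -> CDer Cinv z (- / (z * z))%C.
Proof.
  intros Hz. pose proof (proj1 (Cmod_gt_0 z) Hz) as Hm.
  apply (CDer_of_quadratic_remainder _ _ _ (Cmod z / 2) (2 / Cmod z ^ 3)); [lra |].
  intros w Hw.
  assert (Hzw : Cmod z / 2 <= Cmod (z + w)).
  { pose proof (Cmod_sub_le z (- w)). rewrite Cmod_opp in H.
    replace (z - - w)%C with (z + w)%C in H by ring. lra. }
  assert (Hzw0 : (z + w)%C <> 0%C) by (intro E; rewrite E, Cmod_0 in Hzw; lra).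
  replace (/ (z + w) - / z - - / (z * z) * w)%C with (w * w / (z * z * (z + w)))%C
    by (field; auto).
  rewrite Cmod_div by (repeat apply Cmult_neq_0; auto).
  rewrite !Cmod_mult. pose proof (Cmod_ge_0 w).
  apply Rle_trans with (Cmod w * Cmod w / (Cmod z * Cmod z * (Cmod z / 2))); [| right; field; lra].
  unfold Rdiv. apply Rmult_le_compat_l; [nra |].
  apply Rinv_le_contravar; [apply Rmult_lt_0_compat; [nra | lra] |].
  apply Rmult_le_compat_l; nra.
Qed.

Definition ccont (f : C -> C) (z : C) : Prop :=
  forall eps, 0 < eps -> exists del, 0 < del /\
  forall w, Cmod (w - z) < del -> Cmod (f w - f z) < eps.

Lemma CDer_ccont f z l : CDer f z l -> ccont f z.
Proof.
  intros H eps Heps. destruct (CDer_remainder f z l H 1 ltac:(lra)) as [d [Hd Hw]].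
  pose proof (Cmod_ge_0 l).
  exists (Rmin d (eps / (Cmod l + 2))).
  split; [apply Rmin_pos; [auto | apply Rdiv_lt_0_compat; lra] |].
  intros w Hw'.
  assert (A1 : Cmod (w - z) < d) by (eapply Rlt_le_trans; [exact Hw' | apply Rmin_l]).
  assert (A2 : Cmod (w - z) * (Cmod l + 2) < eps).
  { apply Rlt_le_trans with (eps / (Cmod l + 2) * (Cmod l + 2)); [| right; field; lra].
    apply Rmult_lt_compat_r; [lra |]. eapply Rlt_le_trans; [exact Hw' | apply Rmin_r]. }
  specialize (Hw (w - z)%C A1). replace (z + (w - z))%C with w in Hw by ring.
  replace (f w - f z)%C with ((f w - f z - l * (w - z)) + l * (w - z))%C by ring.
  eapply Rle_lt_trans; [apply Cmod_triangle |]. rewrite Cmod_mult.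
  pose proof (Cmod_ge_0 (w - z)). nra.
Qed.

Definition rderiv (g : R -> C) (x : R) (G : C) : Prop :=
  forall eps, 0 < eps -> exists del, 0 < del /\
    forall h, Rabs h < del -> Cmod (g (x + h)%R - g x - G * h)%C <= eps * Rabs h.

Lemma rderiv_ext (g g' : R -> C) x G : (forall y, g y = g' y) -> rderiv g x G -> rderiv g' x G.
Proof.
  intros E H eps He. destruct (H eps He) as [d [Hd Hw]]. exists d. split; auto.
  intros h Hh. rewrite <- !E. auto.
Qed.

Lemma rderiv_affine (z w : C) (x : R) : rderiv (fun y => z + y * w)%C x w.
Proof.
  intros eps Heps. exists 1. split; [lra |]. intros h _.
  replace (z + RtoC (x + h) * w - (z + RtoC x * w) - w * h)%C with (RtoC 0)
    by (rewrite RtoC_plus; ring).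
  rewrite Cmod_0. pose proof (Rabs_pos h). nra.
Qed.

Lemma rderiv_increment_le (g : R -> C) x G : rderiv g x G ->
  exists d, 0 < d /\ forall h, Rabs h < d -> Cmod (g (x + h)%R - g x) <= (Cmod G + 1) * Rabs h.
Proof.
  intros Hg. destruct (Hg 1 ltac:(lra)) as [d [Hd H]]. exists d. split; [exact Hd |].
  intros h Hh. specialize (H h Hh).
  replace (g (x + h)%R - g x)%C with ((g (x + h)%R - g x - G * h) + G * h)%C by ring.
  eapply Rle_trans; [apply Cmod_triangle |]. rewrite Cmod_mult, Cmod_R. lra.
Qed.

Lemma rderiv_comp (k : C -> C) (g : R -> C) x K G :
  CDer k (g x) K -> rderiv g x G -> rderiv (fun y => k (g y)) x (K * G)%C.
Proof.
  intros Hk Hg eps Heps.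
  set (a := Cmod G + 1). set (b := Cmod K + 1).
  assert (Ha : 0 < a) by (unfold a; pose proof (Cmod_ge_0 G); lra).
  assert (Hb : 0 <= Cmod K < b) by (unfold b; pose proof (Cmod_ge_0 K); lra).
  destruct (CDer_remainder k (g x) K Hk (eps / (2 * a)) ltac:(apply Rdiv_lt_0_compat; lra))
    as [dk [Hdk Hk']].
  destruct (rderiv_increment_le g x G Hg) as [d1 [Hd1 Hg1]].
  destruct (Hg (eps / (2 * b)) ltac:(apply Rdiv_lt_0_compat; lra)) as [d2 [Hd2 Hg2]].
  exists (Rmin (Rmin d1 d2) (dk / a)).
  split; [repeat apply Rmin_pos; auto; apply Rdiv_lt_0_compat; auto |].
  intros h Hh. pose proof (Rabs_pos h).
  pose proof (Rmin_l (Rmin d1 d2) (dk / a)). pose proof (Rmin_r (Rmin d1 d2) (dk / a)).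
  pose proof (Rmin_l d1 d2). pose proof (Rmin_r d1 d2).
  set (D := (g (x + h)%R - g x)%C).
  assert (HD : Cmod D <= a * Rabs h) by (apply Hg1; lra).
  assert (HDk : Cmod D < dk).
  { apply Rle_lt_trans with (a * Rabs h); [exact HD |].
    apply Rlt_le_trans with (a * (dk / a)); [apply Rmult_lt_compat_l; lra | right; field; lra]. }
  specialize (Hk' D HDk). replace (g x + D)%C with (g (x + h)%R) in Hk' by (unfold D; ring).
  specialize (Hg2 h ltac:(lra)).
  replace (k (g (x + h)%R) - k (g x) - K * G * h)%C
    with ((k (g (x + h)%R) - k (g x) - K * D) + K * (g (x + h)%R - g x - G * h))%C by (unfold D; ring).
  eapply Rle_trans; [apply Cmod_triangle |]. rewrite Cmod_mult.
  assert (eps / (2 * a) * Cmod D <= eps / 2 * Rabs h).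
  { apply Rle_trans with (eps / (2 * a) * (a * Rabs h)); [| right; field; lra].
    apply Rmult_le_compat_l; [left; apply Rdiv_lt_0_compat; lra | exact HD]. }
  assert (HKb : Cmod K * Cmod (g (x + h)%R - g x - G * h) <= b * (eps / (2 * b) * Rabs h)).
  { apply Rmult_le_compat; [lra | apply Cmod_ge_0 | lra | exact Hg2]. }
  replace (b * (eps / (2 * b) * Rabs h)) with (eps / 2 * Rabs h) in HKb by (field; lra).
  lra.
Qed.

Lemma rderiv_Im (g : R -> C) x G : rderiv g x G -> is_derive (fun y => Im (g y)) x (Im G).
Proof.
  intros H. apply is_derive_Reals. intros eps Heps.
  destruct (H (eps / 2) ltac:(lra)) as [d [Hd Hw]]. exists (mkposreal d Hd).
  intros h Hn Hh. simpl in Hh. specialize (Hw h Hh).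
  pose proof (im_le_Cmod (g (x + h)%R - g x - G * h)%C) as Him.
  rewrite !im_minus, im_mult, im_RtoC, re_RtoC, Rmult_0_r, Rplus_0_l in Him.
  assert (Hh0 : 0 < Rabs h) by (apply Rabs_pos_lt; auto).
  replace ((Im (g (x + h)%R) - Im (g x)) / h - Im G) with ((Im (g (x + h)%R) - Im (g x) - Im G * h) / h)
    by (field; auto).
  unfold Rdiv. rewrite Rabs_mult, Rabs_inv.
  apply Rle_lt_trans with (eps / 2 * Rabs h * / Rabs h).
  - apply Rmult_le_compat_r; [left; apply Rinv_0_lt_compat |]; lra.
  - field_simplify; lra.
Qed.

Lemma rderiv_Re (g : R -> C) x G : rderiv g x G -> is_derive (fun y => Re (g y)) x (Re G).
Proof.
  intros H. assert (Hi := rderiv_Im _ _ _ (rderiv_comp (fun u => Ci * u)%C g x Ci G (CDer_scal _ _) H)).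
  replace (Re G) with (Im (Ci * G)) by (unfold Im, Re; simpl; ring).
  revert Hi. apply is_derive_ext. intros y. unfold Im, Re; simpl. ring.
Qed.

Lemma Im_CDer_real (f : C -> C) (x d : R) (l : C) : 0 < d ->
  (forall y : R, Rabs (y - x) < d -> Im (f y) = 0) -> CDer f x l -> Im l = 0.
Proof.
  intros Hd Hreal Hf.
  assert (Hf' : CDer f (0 + x * 1)%C l) by (replace (0 + x * 1)%C with (RtoC x) by ring; exact Hf).
  pose proof (rderiv_Im _ _ _ (rderiv_comp f _ x _ _ Hf' (rderiv_affine 0 1 x))) as D.
  apply (is_derive_ext_loc _ (fun _ => 0)) in D.
  - apply is_derive_unique in D. rewrite Derive_const, im_mult in D.
    change (Re 1%C) with 1 in D. change (Im 1%C) with 0 in D. lra.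
  - exists (mkposreal d Hd). intros y Hy.
    replace (0 + y * 1)%C with (RtoC y) by ring. apply Hreal, Hy.
Qed.

(** * Series in powers of [cexp z] *)

Definition exp_term (d : nat -> R) (z : C) (n : nat) : C := Cmult (RtoC (d n)) (pow_n (cexp z) n).

Definition exp_series (d : nat -> R) (z : C) : C :=
  @lim (CompleteNormedModule.CompleteSpace C_AbsRing C_CompleteNormedModule)
    (filtermap (fun N => @sum_n C_AbelianMonoid (exp_term d z) N) eventually).

Definition exp_conv (d : nat -> R) (X : R) : Prop := ex_series (fun n => d n * exp (INR n * X)).

Definition deriv_coef (d : nat -> R) (n : nat) : R := INR n * d n.

Lemma Hfun_exp_series (a : nat -> R) (z : C) : Hfun a z = exp_series (fun n => a n ^ 2) z.
Proof. reflexivity. Qed.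

Lemma deriv_coef_nonneg (d : nat -> R) : (forall n, 0 <= d n) -> forall n, 0 <= deriv_coef d n.
Proof. intros H n. apply Rmult_le_pos; [apply pos_INR | auto]. Qed.

Lemma Cmod_exp_term (d : nat -> R) (z : C) (n : nat) :
  0 <= d n -> Cmod (exp_term d z n) = d n * exp (INR n * Re z).
Proof.
  intros Hd. unfold exp_term. rewrite Cmod_mult, Cmod_R, Rabs_right, pow_n_cexp, Cmod_cexp by lra.
  rewrite re_mult, re_RtoC, im_RtoC. f_equal. f_equal. ring.
Qed.

(* [n d n e^(n X) <= d n e^(n Y) / (Y - X)], as [n (Y - X) <= e^(n (Y - X))]. *)
Lemma exp_conv_deriv_coef (d : nat -> R) (X Y : R) :
  (forall n, 0 <= d n) -> exp_conv d Y -> X < Y -> exp_conv (deriv_coef d) X.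
Proof.
  intros Hd HY HXY.
  apply (@ex_series_le R_AbsRing R_CompleteNormedModule _ (fun n => / (Y - X) * (d n * exp (INR n * Y)))).
  - intros n. change (norm ?x) with (Rabs x). unfold deriv_coef.
    pose proof (pos_INR n). pose proof (Hd n). pose proof (exp_pos (INR n * X)).
    rewrite Rabs_right by (apply Rle_ge; repeat apply Rmult_le_pos; lra).
    replace (exp (INR n * Y)) with (exp (INR n * X) * exp (INR n * (Y - X)))
      by (rewrite <- exp_plus; f_equal; ring).
    pose proof (exp_ineq1_le (INR n * (Y - X))).
    assert (INR n <= / (Y - X) * exp (INR n * (Y - X))).
    { apply Rmult_le_reg_l with (Y - X); [lra |]. rewrite <- Rmult_assoc, Rinv_r by lra. nra. }
    replace (/ (Y - X) * (d n * (exp (INR n * X) * exp (INR n * (Y - X)))))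
      with ((/ (Y - X) * exp (INR n * (Y - X))) * (d n * exp (INR n * X))) by ring.
    rewrite Rmult_assoc. apply Rmult_le_compat_r; [nra | auto].
  - apply (@ex_series_scal_l R_AbsRing R_NormedModule). exact HY.
Qed.

Lemma is_series_exp_series (d : nat -> R) (z : C) (X : R) :
  (forall n, 0 <= d n) -> exp_conv d X -> Re z <= X ->
  @is_series C_AbsRing C_NormedModule (exp_term d z) (exp_series d z).
Proof.
  intros Hd HX Hz.
  assert (Hex : @ex_series C_AbsRing C_NormedModule (exp_term d z)).
  { apply (@ex_series_le C_AbsRing C_CompleteNormedModule _ (fun n => d n * exp (INR n * X)));
      [| exact HX].
    intros n.
    change (norm (exp_term d z n)) with (Cmod (exp_term d z n)). rewrite Cmod_exp_term by auto.
    apply Rmult_le_compat_l; auto. apply exp_le_compat, Rmult_le_compat_l; auto. apply pos_INR. }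
  destruct Hex as [l Hl].
  set (F := filtermap (fun N => @sum_n C_AbelianMonoid (exp_term d z) N) eventually).
  assert (PF : ProperFilter F) by apply filtermap_proper_filter, eventually_filter.
  assert (Hc : cauchy F).
  { intros eps. destruct (Hl (ball l (pos_div_2 eps))) as [N HN]; [now exists (pos_div_2 eps) |].
    exists l, N. intros n Hn. eapply ball_le; [| exact (HN n Hn)]. simpl. destruct eps; simpl; lra. }
  pose proof (@complete_cauchy (CompleteNormedModule.CompleteSpace C_AbsRing C_CompleteNormedModule)
                F PF Hc) as HL.
  intros P [e He]. exact (filter_imp _ _ (fun x Hx => He x Hx) (HL e)).
Qed.

Lemma sum_n_Cmod_le (u : nat -> C) (b : nat -> R) (N : nat) :
  (forall n, Cmod (u n) <= b n) -> Cmod (@sum_n C_AbelianMonoid u N) <= sum_n b N.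
Proof.
  intros H. induction N as [|N IH]; [rewrite !sum_O; apply H |].
  rewrite !sum_Sn. eapply Rle_trans; [apply Cmod_triangle | apply Rplus_le_compat; auto].
Qed.

Lemma Cmod_series_le (u : nat -> C) (l : C) (b : nat -> R) (L : R) :
  @is_series C_AbsRing C_NormedModule u l -> is_series b L ->
  (forall n, Cmod (u n) <= b n) -> Cmod l <= L.
Proof.
  intros Hu Hb Hle.
  assert (Hn : is_lim_seq (fun n => Cmod (@sum_n C_AbelianMonoid u n)) (Cmod l))
    by exact (filterlim_comp _ _ _ (@sum_n C_AbelianMonoid u) norm _ _ _ Hu (filterlim_norm l)).
  change (is_lim_seq (sum_n b) L) in Hb.
  exact (is_lim_seq_le _ _ _ _ (fun n => sum_n_Cmod_le u b n Hle) Hn Hb).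
Qed.

Lemma Im_sum_n_real (u : nat -> C) (N : nat) :
  (forall n, Im (u n) = 0) -> Im (@sum_n C_AbelianMonoid u N) = 0.
Proof.
  intros Hr. induction N as [|N IH]; [rewrite sum_O; auto |].
  rewrite sum_Sn. change (Im (@sum_n C_AbelianMonoid u N + u (S N))%C = 0).
  rewrite im_plus, IH, Hr. ring.
Qed.

Lemma is_series_real (u : nat -> C) (l : C) :
  @is_series C_AbsRing C_NormedModule u l -> (forall n, Im (u n) = 0) -> Im l = 0.
Proof.
  intros Hs Hr. destruct (Req_dec (Im l) 0) as [| Hn]; auto. exfalso.
  assert (Hp : 0 < Rabs (Im l)) by (apply Rabs_pos_lt; auto).
  destruct (Hs (ball l (mkposreal _ Hp))) as [N HN]; [now exists (mkposreal _ Hp) |].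
  destruct (HN N (le_n N)) as [_ H].
  change (Rabs (Im (@sum_n C_AbelianMonoid u N) - Im l) < Rabs (Im l)) in H.
  rewrite Im_sum_n_real, Rminus_0_l, Rabs_Ropp in H by auto. lra.
Qed.

Lemma exp_series_real (d : nat -> R) (x : R) :
  (forall n, 0 <= d n) -> exp_conv d x -> Im (exp_series d x) = 0.
Proof.
  intros Hd Hx. apply (is_series_real (exp_term d x)).
  - apply (is_series_exp_series d x x); auto. simpl; lra.
  - intros n. unfold exp_term. rewrite pow_n_cexp. unfold cexp, Im, Re, RtoC, Cmult; simpl.
    replace (INR n * 0 + 0 * x) with 0 by ring. rewrite sin_0. ring.
Qed.

Lemma exp_term_taylor1 (d : nat -> R) (z w : C) (n : nat) :
  (exp_term d (z + w) n - exp_term d z n - w * exp_term (deriv_coef d) z n)%C =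
  (d n * cexp (INR n * z) * (cexp (INR n * w) - 1 - INR n * w))%C.
Proof.
  unfold exp_term, deriv_coef. rewrite !pow_n_cexp.
  replace (RtoC (INR n) * (z + w))%C with (INR n * z + INR n * w)%C by ring.
  rewrite cexp_plus, RtoC_mult. ring.
Qed.

Lemma exp_term_taylor1_bound (d : nat -> R) (z w : C) (X : R) (n : nat) :
  0 <= d n -> Re z + Cmod w <= X ->
  Cmod (exp_term d (z + w) n - exp_term d z n - w * exp_term (deriv_coef d) z n)%C
    <= 4 * Cmod w ^ 2 * (deriv_coef (deriv_coef d) n * exp (INR n * X)).
Proof.
  intros Hd Hz. rewrite exp_term_taylor1, !Cmod_mult, Cmod_R, Cmod_cexp, Rabs_right by lra.
  pose proof (cexp_taylor1_bound (INR n * w)%C) as Hb.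
  rewrite Cmod_mult, Cmod_R, Rabs_right in Hb by (apply Rle_ge, pos_INR).
  rewrite re_mult, re_RtoC, im_RtoC, Rmult_0_l, Rminus_0_r.
  pose proof (pos_INR n). pose proof (Cmod_ge_0 w). pose proof (exp_pos (INR n * Re z)).
  assert (He : exp (INR n * Re z) * exp (INR n * Cmod w) <= exp (INR n * X)).
  { rewrite <- exp_plus, <- Rmult_plus_distr_l. apply exp_le_compat, Rmult_le_compat_l; auto. }
  apply Rle_trans with (d n * exp (INR n * Re z) * (4 * (INR n * Cmod w) ^ 2 * exp (INR n * Cmod w))).
  { apply Rmult_le_compat_l; [apply Rmult_le_pos |]; lra. }
  unfold deriv_coef.
  replace (d n * exp (INR n * Re z) * (4 * (INR n * Cmod w) ^ 2 * exp (INR n * Cmod w)))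
    with ((4 * Cmod w ^ 2 * (INR n * (INR n * d n))) * (exp (INR n * Re z) * exp (INR n * Cmod w)))
    by ring.
  apply Rle_trans with ((4 * Cmod w ^ 2 * (INR n * (INR n * d n))) * exp (INR n * X));
    [| right; ring].
  apply Rmult_le_compat_l; [| exact He].
  pose proof (pow2_ge_0 (Cmod w)). repeat apply Rmult_le_pos; lra.
Qed.

Lemma CDer_exp_series (d : nat -> R) (z : C) (X : R) :
  (forall n, 0 <= d n) -> exp_conv d X -> exp_conv (deriv_coef d) X ->
  exp_conv (deriv_coef (deriv_coef d)) X -> Re z < X ->
  CDer (exp_series d) z (exp_series (deriv_coef d) z).
Proof.
  intros Hd HX0 HX1 HX2 Hz. pose proof (deriv_coef_nonneg d Hd) as Hd1.
  set (S2 := Series (fun n => deriv_coef (deriv_coef d) n * exp (INR n * X))).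
  apply (CDer_of_quadratic_remainder _ _ _ (X - Re z) (4 * S2)); [lra |].
  intros w Hw.
  assert (Hzw : Re z + Cmod w <= X) by lra.
  assert (Hzw' : Re (z + w)%C <= X)
    by (rewrite re_plus; pose proof (re_le_Cmod w); pose proof (Rle_abs (Re w)); lra).
  pose proof (is_series_exp_series d (z + w)%C X Hd HX0 Hzw') as S1.
  pose proof (is_series_exp_series d z X Hd HX0 ltac:(lra)) as S0.
  pose proof (is_series_exp_series _ z X Hd1 HX1 ltac:(lra)) as S'.
  assert (S : @is_series C_AbsRing C_NormedModule
    (fun n => exp_term d (z + w) n - exp_term d z n - w * exp_term (deriv_coef d) z n)%C
    (exp_series d (z + w) - exp_series d z - w * exp_series (deriv_coef d) z)%C).
  { exact (@is_series_minus C_AbsRing C_NormedModule _ _ _ _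
      (@is_series_minus C_AbsRing C_NormedModule _ _ _ _ S1 S0)
      (@is_series_scal C_AbsRing C_NormedModule w _ _ S')). }
  replace (exp_series (deriv_coef d) z * w)%C with (w * exp_series (deriv_coef d) z)%C by ring.
  replace (4 * S2 * Cmod w ^ 2) with (scal (4 * Cmod w ^ 2) S2)
    by (change scal with Rmult; simpl; ring).
  apply (Cmod_series_le _ _ _ _ S (@is_series_scal R_AbsRing R_NormedModule (4 * Cmod w ^ 2) _ _
           (Series_correct _ HX2))).
  intros n. apply exp_term_taylor1_bound; auto.
Qed.

Lemma exp_conv_deriv_coef_lt (d : nat -> R) (tG : Rbar) : (forall n, 0 <= d n) ->
  (forall X : R, Rbar_lt X tG -> exp_conv d X) ->
  forall X : R, Rbar_lt X tG -> exp_conv (deriv_coef d) X.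
Proof.
  intros Hd HC X HX. destruct (Rbar_lt_between X tG HX) as [Y [HXY HY]].
  exact (exp_conv_deriv_coef d X Y Hd (HC Y HY) HXY).
Qed.

Lemma CDer_exp_series_lt (d : nat -> R) (tG : Rbar) (z : C) : (forall n, 0 <= d n) ->
  (forall X : R, Rbar_lt X tG -> exp_conv d X) -> Rbar_lt (Re z) tG ->
  CDer (exp_series d) z (exp_series (deriv_coef d) z).
Proof.
  intros Hd HC Hz. destruct (Rbar_lt_between _ tG Hz) as [X [HzX HX]].
  pose proof (deriv_coef_nonneg d Hd) as Hd1.
  pose proof (exp_conv_deriv_coef_lt d tG Hd HC) as HC1.
  pose proof (exp_conv_deriv_coef_lt _ tG Hd1 HC1) as HC2.
  exact (CDer_exp_series d z X Hd (HC X HX) (HC1 X HX) (HC2 X HX) HzX).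
Qed.

(** * The mean value property and the Cauchy estimate *)

Definition circle (z0 : C) (r v : R) : C := (z0 + r * cexp (Ci * v))%C.

Definition circle_integral (k : C -> C) (z0 : C) (r : R) : R :=
  RInt (fun v => Re (k (circle z0 r v))) 0 (2 * PI).

Lemma cexp_Ci_mult (v : R) : cexp (Ci * v) = (cos v, sin v).
Proof.
  unfold cexp. rewrite re_mult, im_mult. unfold Ci, Re, Im; simpl.
  replace (0 * v - 1 * 0) with 0 by ring. replace (0 * 0 + 1 * v) with v by ring.
  rewrite exp_0, !Rmult_1_l. reflexivity.
Qed.

Lemma Cmod_cexp_Ci_mult (v : R) : Cmod (cexp (Ci * v)) = 1.
Proof. rewrite Cmod_cexp, re_mult. unfold Ci, Re, Im; simpl. rewrite <- exp_0. f_equal. ring. Qed.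

Lemma Cmod_cexp_Ci_mult_sub (v t : R) : Cmod (cexp (Ci * v) - cexp (Ci * t)) <= 2 * Rabs (v - t).
Proof.
  eapply Rle_trans; [apply Cmod_le_Re_Im |]. rewrite re_minus, im_minus, !cexp_Ci_mult.
  unfold Re, Im; simpl. pose proof (cos_lipschitz v t). pose proof (sin_lipschitz v t). lra.
Qed.

Lemma Cmod_circle (z0 : C) (r v : R) : Cmod (circle z0 r v - z0) = Rabs r.
Proof.
  unfold circle. replace (z0 + r * cexp (Ci * v) - z0)%C with (r * cexp (Ci * v))%C by ring.
  rewrite Cmod_mult, Cmod_R, Cmod_cexp_Ci_mult. ring.
Qed.

Lemma Cmod_circle_sub (z0 : C) (u v r t : R) :
  Cmod (circle z0 u v - circle z0 r t) <= Rabs (u - r) + 2 * Rabs r * Rabs (v - t).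
Proof.
  unfold circle.
  replace (z0 + u * cexp (Ci * v) - (z0 + r * cexp (Ci * t)))%C
    with ((u - r) * cexp (Ci * v) + r * (cexp (Ci * v) - cexp (Ci * t)))%C
    by ring.
  eapply Rle_trans; [apply Cmod_triangle |].
  rewrite <- RtoC_minus, !Cmod_mult, !Cmod_R, Cmod_cexp_Ci_mult, Rmult_1_r.
  pose proof (Cmod_cexp_Ci_mult_sub v t). pose proof (Rabs_pos r). nra.
Qed.

Lemma circle_2PI (z0 : C) (r : R) : circle z0 r (2 * PI) = circle z0 r 0.
Proof. unfold circle. rewrite !cexp_Ci_mult, cos_2PI, sin_2PI, cos_0, sin_0. reflexivity. Qed.

Lemma rderiv_circle_radius (z0 : C) (r v : R) :
  rderiv (fun u => circle z0 u v) r (cexp (Ci * v)).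
Proof. apply rderiv_affine. Qed.

Lemma rderiv_circle_angle (z0 : C) (r v : R) :
  rderiv (circle z0 r) v (r * cexp (Ci * v) * Ci)%C.
Proof.
  assert (Hk : CDer (fun u => z0 + r * cexp u)%C (0 + v * Ci)%C (r * cexp (Ci * v))%C).
  { replace (0 + v * Ci)%C with (Ci * v)%C by ring.
    pose proof (CDer_plus _ _ _ _ _ (CDer_const z0 (Ci * v)%C)
                  (CDer_mult _ _ _ _ _ (CDer_const (RtoC r) (Ci * v)%C) (CDer_cexp (Ci * v)))) as H.
    cbv beta in H. replace (0 + (0 * cexp (Ci * v) + r * cexp (Ci * v)))%C
      with (r * cexp (Ci * v))%C in H by ring. exact H. }
  apply (rderiv_ext (fun y => (fun u => z0 + r * cexp u) (0 + y * Ci))%C).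
  - intros y. unfold circle. replace (0 + y * Ci)%C with (Ci * y)%C by ring. reflexivity.
  - exact (rderiv_comp _ _ v _ _ Hk (rderiv_affine 0 Ci v)).
Qed.

Section MeanValue.

Variables (k k' : C -> C) (z0 : C) (R0 : R).
Hypothesis Hk : forall w, 0 < Cmod (w - z0) < R0 -> CDer k w (k' w) /\ ccont k' w.

Lemma circle_in_annulus (r v : R) : 0 < r < R0 -> 0 < Cmod (circle z0 r v - z0) < R0.
Proof. intros Hr. rewrite Cmod_circle, Rabs_right; lra. Qed.

Let radial_der (u v : R) : C := (k' (circle z0 u v) * cexp (Ci * v))%C.

Lemma is_derive_circle_radius (r v : R) : 0 < r < R0 ->
  is_derive (fun u => Re (k (circle z0 u v))) r (Re (radial_der r v)).
Proof.
  intros Hr. apply (rderiv_Re (fun u => k (circle z0 u v))).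
  apply rderiv_comp; [apply Hk, circle_in_annulus, Hr | apply rderiv_circle_radius].
Qed.

Lemma rderiv_circle_angle_comp (r v : R) : 0 < r < R0 ->
  rderiv (fun v => k (circle z0 r v)) v (k' (circle z0 r v) * (r * cexp (Ci * v) * Ci))%C.
Proof.
  intros Hr. apply rderiv_comp; [apply Hk, circle_in_annulus, Hr | apply rderiv_circle_angle].
Qed.

Lemma is_derive_circle_angle (r v : R) : 0 < r < R0 ->
  is_derive (fun v => Im (k (circle z0 r v))) v (r * Re (radial_der r v)).
Proof.
  intros Hr.
  replace (r * Re (radial_der r v)) with (Im (k' (circle z0 r v) * (r * cexp (Ci * v) * Ci))%C).
  - apply rderiv_Im, rderiv_circle_angle_comp, Hr.
  - unfold radial_der. destruct (k' _), (cexp _). unfold Im, Re, Ci, RtoC, Cmult; simpl. ring.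
Qed.

Lemma radial_der_continuous (r t : R) : 0 < r < R0 ->
  forall eps, 0 < eps -> exists del, 0 < del /\
  forall u v, Rabs (u - r) < del -> Rabs (v - t) < del ->
    Cmod (radial_der u v - radial_der r t) < eps.
Proof.
  intros Hr eps Heps.
  set (K := Cmod (k' (circle z0 r t))). assert (HK : 0 <= K) by apply Cmod_ge_0.
  destruct (proj2 (Hk _ (circle_in_annulus r t Hr)) (eps / 2) ltac:(lra)) as [d1 [Hd1 Hk']].
  set (m := 1 + 2 * r). set (d2 := eps / (4 * (K + 1))).
  assert (Hd2 : 0 < d2) by (apply Rdiv_lt_0_compat; lra).
  exists (Rmin (d1 / m) d2). split; [apply Rmin_pos; [apply Rdiv_lt_0_compat |]; unfold m; lra |].
  intros u v Hu Hv.
  assert (Hu1 : Rabs (u - r) < d1 / m) by (eapply Rlt_le_trans; [exact Hu | apply Rmin_l]).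
  assert (Hv1 : Rabs (v - t) < d1 / m) by (eapply Rlt_le_trans; [exact Hv | apply Rmin_l]).
  assert (Hv2 : Rabs (v - t) < d2) by (eapply Rlt_le_trans; [exact Hv | apply Rmin_r]).
  assert (Hc : Cmod (circle z0 u v - circle z0 r t) < d1).
  { eapply Rle_lt_trans; [apply Cmod_circle_sub |]. rewrite (Rabs_right r) by lra.
    apply Rlt_le_trans with (d1 / m + 2 * r * (d1 / m)); [| right; unfold m; field; lra].
    pose proof (Rabs_pos (v - t)).
    assert (2 * r * Rabs (v - t) <= 2 * r * (d1 / m)) by (apply Rmult_le_compat_l; lra).
    lra. }
  specialize (Hk' _ Hc).
  unfold radial_der. replace (k' (circle z0 u v) * cexp (Ci * v) - k' (circle z0 r t) * cexp (Ci * t))%C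
    with ((k' (circle z0 u v) - k' (circle z0 r t)) * cexp (Ci * v)
          + k' (circle z0 r t) * (cexp (Ci * v) - cexp (Ci * t)))%C by ring.
  eapply Rle_lt_trans; [apply Cmod_triangle |].
  rewrite !Cmod_mult, Cmod_cexp_Ci_mult, Rmult_1_r. fold K.
  pose proof (Cmod_cexp_Ci_mult_sub v t).
  assert (K * Cmod (cexp (Ci * v) - cexp (Ci * t)) <= K * (2 * d2)) by (apply Rmult_le_compat_l; lra).
  assert (K * (2 * d2) < eps / 2).
  { replace (K * (2 * d2)) with (eps / 2 * K / (K + 1)) by (unfold d2; field; lra).
    apply Rmult_lt_reg_r with (K + 1); [lra |].
    unfold Rdiv. rewrite Rmult_assoc, Rinv_l by lra. nra. }
  lra.
Qed.

Lemma continuity_2d_pt_Re_radial_der (r t : R) : 0 < r < R0 ->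
  continuity_2d_pt (fun u v => Re (radial_der u v)) r t.
Proof.
  intros Hr eps. destruct (radial_der_continuous r t Hr eps (cond_pos eps)) as [d [Hd HG]].
  exists (mkposreal d Hd). intros u v Hu Hv. rewrite <- re_minus.
  eapply Rle_lt_trans; [apply re_le_Cmod | apply HG; auto].
Qed.

Lemma continuous_Re_radial_der (r t : R) : 0 < r < R0 ->
  continuous (fun v => Re (radial_der r v)) t.
Proof.
  intros Hr. apply continuity_pt_filterlim. intros eps Heps.
  destruct (radial_der_continuous r t Hr eps Heps) as [d [Hd HG]]. exists d. split; [exact Hd |].
  intros v [_ Hv]. change (Rabs (v - t) < d) in Hv.
  change (Rabs (Re (radial_der r v) - Re (radial_der r t)) < eps). rewrite <- re_minus.
  eapply Rle_lt_trans; [apply re_le_Cmod | apply HG; [rewrite Rminus_diag, Rabs_R0 | ]; auto].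
Qed.

Lemma ex_RInt_circle (r : R) : 0 < r < R0 -> ex_RInt (fun v => Re (k (circle z0 r v))) 0 (2 * PI).
Proof.
  intros Hr. apply (@ex_RInt_continuous R_CompleteNormedModule). intros v _.
  apply (@ex_derive_continuous R_AbsRing R_NormedModule). eexists.
  apply (rderiv_Re (fun v => k (circle z0 r v))), rderiv_circle_angle_comp, Hr.
Qed.

(* [d/dv Im k(circle r v) = r Re (radial_der r v)] and [v |-> circle r v] is 2 pi-periodic. *)
Lemma is_RInt_Re_radial_der (r : R) : 0 < r < R0 ->
  is_RInt (fun v => Re (radial_der r v)) 0 (2 * PI) 0.
Proof.
  intros Hr.
  assert (Hi := @is_RInt_derive R_CompleteNormedModule (fun v => Im (k (circle z0 r v)))
                  (fun v => r * Re (radial_der r v)) 0 (2 * PI)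
                  (fun v _ => is_derive_circle_angle r v Hr)
                  (fun v _ => @continuous_scal_r R_UniformSpace R_AbsRing R_NormedModule r _ v
                                (continuous_Re_radial_der r v Hr))).
  cbv beta in Hi. rewrite circle_2PI, minus_eq_zero in Hi.
  apply (@is_RInt_scal R_NormedModule _ _ _ (/ r)) in Hi.
  match type of Hi with is_RInt _ _ _ ?l => replace l with 0 in Hi by (symmetry; apply Rmult_0_r) end.
  revert Hi. apply (@is_RInt_ext R_NormedModule). intros v _.
  change (/ r * (r * Re (radial_der r v)) = Re (radial_der r v)). field. lra.
Qed.

Lemma is_derive_circle_integral (r : R) : 0 < r < R0 -> is_derive (circle_integral k z0) r 0.
Proof.
  intros Hr. set (d := Rmin r (R0 - r)). assert (Hd : 0 < d) by (apply Rmin_pos; lra).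
  assert (Hin : forall u, Rabs (u - r) < d -> 0 < u < R0).
  { intros u Hu. pose proof (Rmin_l r (R0 - r)). pose proof (Rmin_r r (R0 - r)).
    apply Rabs_def2 in Hu. unfold d in Hu. lra. }
  rewrite <- (is_RInt_unique _ _ _ _ (is_RInt_Re_radial_der r Hr)). unfold circle_integral.
  apply (is_derive_ext (fun u => RInt (fun v => Re (k (circle z0 u v))) 0 (2 * PI))); [reflexivity |].
  assert (HD : forall u v, 0 < u < R0 ->
    Derive (fun u => Re (k (circle z0 u v))) u = Re (radial_der u v))
    by (intros u v Hu; apply is_derive_unique, is_derive_circle_radius, Hu).
  rewrite (RInt_ext _ (fun v => Derive (fun u => Re (k (circle z0 u v))) r))
    by (intros v _; symmetry; apply HD, Hr).
  apply is_derive_RInt_param.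
  - exists (mkposreal d Hd). intros u Hu v _. eexists. apply is_derive_circle_radius, Hin, Hu.
  - intros t _. apply (continuity_2d_pt_ext_loc (fun u v => Re (radial_der u v))).
    + exists (mkposreal d Hd). intros u v Hu _. symmetry. apply HD, Hin, Hu.
    + apply continuity_2d_pt_Re_radial_der, Hr.
  - exists (mkposreal d Hd). intros u Hu. apply ex_RInt_circle, Hin, Hu.
Qed.

Lemma circle_integral_const (r s : R) : 0 < s <= r -> r < R0 ->
  circle_integral k z0 r = circle_integral k z0 s.
Proof.
  intros Hs Hr.
  assert (Hi := @is_RInt_derive R_CompleteNormedModule (circle_integral k z0) (fun _ => 0) s r).
  rewrite Rmin_left, Rmax_right in Hi by lra.
  assert (E := Hi (fun u Hu => is_derive_circle_integral u ltac:(lra))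
                  (fun u _ => continuous_const 0 u)).
  apply (@is_RInt_unique R_CompleteNormedModule) in E.
  rewrite (@RInt_const R_CompleteNormedModule) in E.
  change ((r - s) * 0 = circle_integral k z0 r - circle_integral k z0 s) in E. lra.
Qed.

Lemma mean_value_property (r : R) : 0 < r < R0 -> ccont k z0 ->
  circle_integral k z0 r = 2 * PI * Re (k z0).
Proof.
  intros Hr Hk0. pose proof PI_RGT_0.
  apply Rminus_diag_uniq, Rabs_eq_0, Rle_antisym; [| apply Rabs_pos].
  apply le_epsilon. intros eps Heps.
  destruct (Hk0 (eps / (2 * PI)) ltac:(apply Rdiv_lt_0_compat; lra)) as [d [Hd Hkd]].
  set (s := Rmin r (d / 2)). assert (Hs : 0 < s) by (apply Rmin_pos; lra).
  assert (Hsr : s <= r) by apply Rmin_l.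
  assert (Hsd : s < d) by (unfold s; pose proof (Rmin_r r (d / 2)); lra).
  rewrite (circle_integral_const r s) by lra.
  assert (EM := @is_RInt_minus R_NormedModule _ _ _ _ _ _
    ((@RInt_correct R_CompleteNormedModule) _ _ _ (ex_RInt_circle s ltac:(lra)))
    (@is_RInt_const R_NormedModule 0 (2 * PI) (Re (k z0)))).
  assert (Hpt : forall v, 0 <= v <= 2 * PI ->
    norm (minus (Re (k (circle z0 s v))) (Re (k z0))) <= eps / (2 * PI)).
  { intros v _. change (Rabs (Re (k (circle z0 s v)) - Re (k z0)) <= eps / (2 * PI)).
    rewrite <- re_minus. eapply Rle_trans; [apply re_le_Cmod |]. left. apply Hkd.
    rewrite Cmod_circle, Rabs_right; lra. }
  assert (B := @norm_RInt_le_const R_NormedModule _ 0 (2 * PI) _ _ ltac:(lra) Hpt EM).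
  change (Rabs (circle_integral k z0 s - (2 * PI - 0) * Re (k z0)) <= (2 * PI - 0) * (eps / (2 * PI)))
    in B.
  replace ((2 * PI - 0) * (eps / (2 * PI))) with eps in B by (field; lra).
  rewrite Rminus_0_r in B. lra.
Qed.

End MeanValue.

Lemma Rabs_circle_integral_le (k : C -> C) (z0 : C) (r K : R) :
  ex_RInt (fun v => Re (k (circle z0 r v))) 0 (2 * PI) ->
  (forall v, Cmod (k (circle z0 r v)) <= K) -> Rabs (circle_integral k z0 r) <= 2 * PI * K.
Proof.
  intros Hex HK. pose proof PI_RGT_0.
  assert (Hpt : forall v, 0 <= v <= 2 * PI -> norm (Re (k (circle z0 r v))) <= K)
    by (intros v _; eapply Rle_trans; [apply re_le_Cmod | apply HK]).
  pose proof (@norm_RInt_le_const R_NormedModule _ 0 (2 * PI) _ _ ltac:(lra) Hpt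
                ((@RInt_correct R_CompleteNormedModule) _ _ _ Hex)) as B.
  rewrite Rminus_0_r in B. exact B.
Qed.

Definition slope (g : C -> C) (z0 l x : C) : C :=
  if Ceq_dec x z0 then l else ((g x - g z0) / (x - z0))%C.

Lemma ccont_slope (g : C -> C) (z0 l : C) : CDer g z0 l -> ccont (slope g z0 l) z0.
Proof.
  intros Hg eps Heps. destruct (CDer_remainder g z0 l Hg (eps / 2) ltac:(lra)) as [d [Hd Hr]].
  exists d. split; [exact Hd |]. intros w Hw. unfold slope.
  destruct (Ceq_dec z0 z0) as [_ | ]; [| congruence].
  destruct (Ceq_dec w z0) as [-> | Hn]; [rewrite Cmod_sub_diag; lra |].
  assert (Hn' : (w - z0)%C <> 0%C) by (intro E; apply Hn, Ceq_minus, E).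
  pose proof (proj1 (Cmod_gt_0 _) Hn').
  specialize (Hr (w - z0)%C Hw). replace (z0 + (w - z0))%C with w in Hr by ring.
  replace ((g w - g z0) / (w - z0) - l)%C with ((g w - g z0 - l * (w - z0)) / (w - z0))%C
    by (field; auto).
  rewrite Cmod_div by auto.
  apply Rle_lt_trans with (eps / 2 * Cmod (w - z0) / Cmod (w - z0)).
  - unfold Rdiv. apply Rmult_le_compat_r; [left; apply Rinv_0_lt_compat |]; lra.
  - replace (eps / 2 * Cmod (w - z0) / Cmod (w - z0)) with (eps / 2) by (field; lra). lra.
Qed.

Lemma CDer_slope (g g' : C -> C) (z0 l x : C) : x <> z0 -> CDer g x (g' x) ->
  CDer (slope g z0 l) x ((g' x * (x - z0) - (g x - g z0)) / ((x - z0) * (x - z0)))%C.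
Proof.
  intros Hx Hg. assert (Hx' : (x - z0)%C <> 0%C) by (intro E; apply Hx, Ceq_minus, E).
  pose proof (proj1 (Cmod_gt_0 _) Hx').
  apply (CDer_ext_loc (fun y => (g y - g z0) * Cinv (y - z0))%C _ _ _ (Cmod (x - z0))); [lra | |].
  - intros w Hw. unfold slope. destruct (Ceq_dec w z0) as [-> |]; [| reflexivity].
    rewrite <- Cmod_opp in Hw. replace (- (z0 - x))%C with (x - z0)%C in Hw by ring. lra.
  - pose proof (CDer_mult _ _ x _ _ (CDer_minus _ _ x _ _ Hg (CDer_const (g z0) x))
      (CDer_comp Cinv (fun y => y - z0)%C x _ _ (CDer_Cinv _ Hx')
        (CDer_minus _ _ x _ _ (CDer_id x) (CDer_const z0 x)))) as D.
    cbv beta in D. match type of D with CDer _ _ ?l => replace l with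
      ((g' x * (x - z0) - (g x - g z0)) / ((x - z0) * (x - z0)))%C in D by (field; auto) end.
    exact D.
Qed.

Lemma Cmod_slope_circle_le (g : C -> C) (z0 l : C) (r M v : R) : 0 < r ->
  (forall w, Cmod (w - z0) <= r -> Cmod (g w) <= M) ->
  Cmod (slope g z0 l (circle z0 r v)) <= 2 * M / r.
Proof.
  intros Hr HB. pose proof (Cmod_circle z0 r v) as Hc. rewrite Rabs_right in Hc by lra.
  unfold slope. destruct (Ceq_dec (circle z0 r v) z0) as [E | _].
  { rewrite E, Cmod_sub_diag in Hc. lra. }
  rewrite Cmod_div, Hc by (apply Cmod_gt_0; lra).
  unfold Rdiv. apply Rmult_le_compat_r; [left; apply Rinv_0_lt_compat; lra |].
  eapply Rle_trans; [apply Cmod_triangle |]. rewrite Cmod_opp.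
  pose proof (HB _ (Req_le _ _ Hc)). pose proof (HB z0 ltac:(rewrite Cmod_sub_diag; lra)). lra.
Qed.

Lemma Rabs_Re_deriv_le (g g' : C -> C) (z0 : C) (r R0 K : R) : 0 < r < R0 ->
  (forall w, Cmod (w - z0) < R0 -> CDer g w (g' w) /\ exists l, CDer g' w l) ->
  (forall v, Cmod (slope g z0 (g' z0) (circle z0 r v)) <= K) ->
  Rabs (Re (g' z0)) <= K.
Proof.
  intros Hr Hd HK.
  set (k' := fun x => ((g' x * (x - z0) - (g x - g z0)) / ((x - z0) * (x - z0)))%C).
  assert (Hk : forall w, 0 < Cmod (w - z0) < R0 -> CDer (slope g z0 (g' z0)) w (k' w) /\ ccont k' w).
  { intros w [Hw0 Hw1]. assert (Hwz : w <> z0) by (intros ->; rewrite Cmod_sub_diag in Hw0; lra).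
    destruct (Hd w Hw1) as [Hg [l Hl]].
    split; [apply CDer_slope; auto |].
    assert (Hw' : ((w - z0) * (w - z0))%C <> 0%C)
      by (apply Cmult_neq_0; intro E; apply Hwz, Ceq_minus, E).
    eapply CDer_ccont, CDer_mult.
    - apply CDer_minus; [apply CDer_mult; [exact Hl |] | apply CDer_minus; [exact Hg | apply CDer_const]].
      apply CDer_minus; [apply CDer_id | apply CDer_const].
    - apply (CDer_comp Cinv (fun x => (x - z0) * (x - z0))%C); [apply CDer_Cinv, Hw' |].
      apply CDer_mult; apply CDer_minus;
        [apply CDer_id | apply CDer_const | apply CDer_id | apply CDer_const]. }
  pose proof (mean_value_property _ _ z0 R0 Hk r Hr
                (ccont_slope g z0 (g' z0) (proj1 (Hd z0 ltac:(rewrite Cmod_sub_diag; lra))))) as Hmean.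
  pose proof (Rabs_circle_integral_le _ z0 r _ (ex_RInt_circle _ _ z0 R0 Hk r Hr) HK) as B.
  rewrite Hmean in B. unfold slope in B. destruct (Ceq_dec z0 z0) as [_ | ]; [| congruence].
  pose proof PI_RGT_0. rewrite Rabs_mult, Rabs_right in B by lra. nra.
Qed.

(* Apply [Rabs_Re_deriv_le] to [c g] with [c = conj (g' z0)], so that [Re (c g' z0) = |g' z0|^2]. *)
Lemma Cauchy_estimate (g g' : C -> C) (z0 : C) (r R0 M : R) : 0 < r < R0 ->
  (forall w, Cmod (w - z0) < R0 -> CDer g w (g' w) /\ exists l, CDer g' w l) ->
  (forall w, Cmod (w - z0) <= r -> Cmod (g w) <= M) ->
  Cmod (g' z0) <= 2 * M / r.
Proof.
  intros Hr Hd HB. set (c := Cconj (g' z0)).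
  assert (HcB : forall w, Cmod (w - z0) <= r -> Cmod (c * g w) <= Cmod c * M)
    by (intros w Hw; rewrite Cmod_mult; apply Rmult_le_compat_l; [apply Cmod_ge_0 | auto]).
  assert (Hcd : forall w, Cmod (w - z0) < R0 ->
    CDer (fun x => c * g x)%C w (c * g' w) /\ exists l, CDer (fun x => c * g' x)%C w l).
  { intros w Hw. destruct (Hd w Hw) as [Hg [l Hl]].
    pose proof (CDer_mult _ _ w _ _ (CDer_const c w) Hg) as D. cbv beta in D.
    replace (0 * g w + c * g' w)%C with (c * g' w)%C in D by ring.
    split; [exact D | eexists; apply CDer_mult; [apply CDer_const | exact Hl]]. }
  pose proof (Rabs_Re_deriv_le (fun x => c * g x)%C (fun x => c * g' x)%C z0 r R0 _ Hr Hcd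
                (fun v => Cmod_slope_circle_le _ z0 _ r _ v ltac:(lra) HcB)) as H.
  cbv beta in H. replace (Re (c * g' z0)%C) with (Cmod (g' z0) ^ 2) in H
    by (unfold c; rewrite Cmod2_alt; destruct (g' z0); unfold Cconj, Re, Im, Cmult; simpl; ring).
  unfold c in H. rewrite Cmod_conj, Rabs_right in H by (apply Rle_ge, pow2_ge_0).
  pose proof (Cmod_ge_0 (g' z0)).
  assert (HM0 : 0 <= M)
    by (eapply Rle_trans; [apply Cmod_ge_0 | apply HB; rewrite Cmod_sub_diag; lra]).
  destruct (Req_dec (Cmod (g' z0)) 0) as [E0 | E0].
  - rewrite E0. apply Rmult_le_pos; [lra | left; apply Rinv_0_lt_compat; lra].
  - apply Rmult_le_reg_l with (Cmod (g' z0)); [lra |].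
    replace (Cmod (g' z0) * (2 * M / r)) with (2 * (Cmod (g' z0) * M) / r) by (field; lra).
    nra.
Qed.

(** * The functions [H], [A] and [B] *)

Section HAB.

Variables (a : nat -> R) (tG : Rbar).
Hypothesis Hs : std_hyp a tG.

Let coef (n : nat) : R := a n ^ 2.
Let H1 : C -> C := exp_series (deriv_coef coef).
Let H2 : C -> C := exp_series (deriv_coef (deriv_coef coef)).

Lemma coef_nonneg : forall n, 0 <= coef n.
Proof. intros n. apply pow2_ge_0. Qed.

Lemma exp_conv_coef (X : R) : Rbar_lt X tG -> exp_conv coef X.
Proof.
  destruct Hs as [_ [_ Hr]]. intros HX.
  assert (Hin : Rbar_lt (Rabs (exp X)) (CV_radius (fun n => a n ^ 2))).
  { rewrite Rabs_right by (left; apply exp_pos).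
    destruct Hr as [[E1 E2] | [E1 E2]]; rewrite E1; subst tG; simpl in *; [| exact I].
    rewrite <- exp_0. apply exp_increasing, HX. }
  destruct (CV_radius_inside _ _ Hin) as [l Hl]. exists l. revert Hl. apply is_series_ext.
  intros n. change (scal (pow_n (exp X) n) (a n ^ 2)) with (pow_n (exp X) n * a n ^ 2).
  rewrite pow_n_pow, exp_pow. unfold coef. apply Rmult_comm.
Qed.

Lemma CDer_Hfun (z : C) : Rbar_lt (Re z) tG -> CDer (Hfun a) z (H1 z).
Proof. apply (CDer_exp_series_lt coef tG z coef_nonneg exp_conv_coef). Qed.

Lemma CDer_H1 (z : C) : Rbar_lt (Re z) tG -> CDer H1 z (H2 z).
Proof.
  apply (CDer_exp_series_lt _ tG z (deriv_coef_nonneg coef coef_nonneg)).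
  apply exp_conv_deriv_coef_lt; [apply coef_nonneg | apply exp_conv_coef].
Qed.

Lemma Afun_eq (z : C) : Rbar_lt (Re z) tG -> Afun a z = (H1 z / Hfun a z)%C.
Proof.
  intros Hz. unfold Afun. f_equal. apply is_C_derive_unique, CDer_is_derive, CDer_Hfun, Hz.
Qed.

Lemma CDer_Afun (z : C) : Rbar_lt (Re z) tG -> Hfun a z <> 0%C -> CDer (Afun a) z (Bfun a z).
Proof.
  intros Hz Hz0. destruct (Rbar_lt_between _ tG Hz) as [X [HzX HX]].
  assert (D : CDer (Afun a) z
    (H2 z * / Hfun a z + H1 z * (H1 z * (- / (Hfun a z * Hfun a z))))%C).
  { apply (CDer_ext_loc (fun w => H1 w * Cinv (Hfun a w))%C _ _ _ (X - Re z)); [lra | |].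
    - intros w Hw. symmetry. apply Afun_eq.
      apply (Rbar_le_lt_trans _ X); [| exact HX]. simpl.
      pose proof (re_le_Cmod (w - z)). rewrite re_minus in H. pose proof (Rle_abs (Re w - Re z)). lra.
    - exact (CDer_mult _ _ z _ _ (CDer_H1 z Hz)
               (CDer_comp Cinv (Hfun a) z _ _ (CDer_Cinv _ Hz0) (CDer_Hfun z Hz))). }
  unfold Bfun. rewrite (is_C_derive_unique _ _ _ (proj1 (CDer_is_derive _ _ _) D)). exact D.
Qed.

Lemma Afun_real (x : R) : Rbar_lt x tG -> Im (Afun a x) = 0.
Proof.
  intros Hx. rewrite Afun_eq by exact Hx.
  destruct (Rbar_lt_between _ tG Hx) as [Y [HxY HY]].
  assert (Hc : exp_conv coef x) by (apply exp_conv_coef, Hx).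
  assert (Hc1 : exp_conv (deriv_coef coef) x)
    by (apply (exp_conv_deriv_coef coef x Y coef_nonneg); [apply exp_conv_coef, HY | exact HxY]).
  rewrite Hfun_exp_series. fold coef.
  pose proof (exp_series_real _ x (deriv_coef_nonneg coef coef_nonneg) Hc1) as E1.
  pose proof (exp_series_real _ x coef_nonneg Hc) as E2.
  unfold H1. destruct (exp_series (deriv_coef coef) x) as [u1 u2], (exp_series coef x) as [v1 v2].
  simpl in E1, E2. subst. unfold Cdiv, Cinv, Cmult, Im; simpl. unfold Rdiv. ring.
Qed.

Lemma Bfun_real (t : R) : Rbar_lt t tG -> Hfun a t <> 0%C -> Im (Bfun a t) = 0.
Proof.
  intros Ht Ht0. destruct (Rbar_lt_between _ tG Ht) as [Y [HtY HY]].
  apply (Im_CDer_real (Afun a) t (Y - t)); [lra | | apply CDer_Afun; auto].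
  intros y Hy. apply Afun_real. apply (Rbar_le_lt_trans _ Y); [| exact HY]. simpl.
  pose proof (Rle_abs (y - t)). lra.
Qed.

End HAB.

Lemma continuous_Im_imaginary_axis (F : C -> C) (phi : R) :
  ccont F (Ci * phi)%C -> continuous (fun phi : R => Im (F (Ci * phi)%C)) phi.
Proof.
  intros HF. apply continuity_pt_filterlim. intros eps Heps.
  destruct (HF eps Heps) as [d [Hd Hd']]. exists d. split; [exact Hd |].
  intros y [_ Hy]. change (Rabs (y - phi) < d) in Hy.
  change (Rabs (Im (F (Ci * y)%C) - Im (F (Ci * phi)%C)) < eps). rewrite <- im_minus.
  eapply Rle_lt_trans; [apply im_le_Cmod | apply Hd'].
  replace (Ci * y - Ci * phi)%C with (Ci * (y - phi)%R)%C by (rewrite RtoC_minus; ring).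
  rewrite Cmod_Ci_mult. exact Hy.
Qed.

(* [d/dphi L(i phi) = i F(i phi)], whose real part is [- Im F(i phi)]. *)
Lemma RInt_Im_imaginary_axis (L F : C -> C) (r theta : R) :
  (forall tau, Cmod tau < r -> CDer L tau (F tau) /\ ccont F tau) -> Rabs theta < r ->
  RInt (fun phi => Im (F (Ci * phi)%C)) 0 theta = Re (L 0) - Re (L (Ci * theta)%C).
Proof.
  intros HLF Hth.
  assert (Hb : forall phi, Rmin 0 theta <= phi <= Rmax 0 theta -> Cmod (Ci * phi)%C < r).
  { intros phi Hphi. rewrite Cmod_Ci_mult. unfold Rmin, Rmax in Hphi.
    destruct (Rle_dec 0 theta); [rewrite Rabs_right in Hth by lra | rewrite Rabs_left in Hth by lra];
      apply Rabs_def1; lra. }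
  assert (D : forall phi, Rmin 0 theta <= phi <= Rmax 0 theta ->
    is_derive (fun phi : R => - Re (L (Ci * phi)%C)) phi (Im (F (Ci * phi)%C))).
  { intros phi Hphi.
    assert (HL : CDer L (0 + phi * Ci)%C (F (Ci * phi)%C))
      by (replace (0 + phi * Ci)%C with (Ci * phi)%C by ring; apply HLF, Hb, Hphi).
    pose proof (rderiv_Re _ _ _ (rderiv_comp L _ phi _ _ HL (rderiv_affine 0 Ci phi))) as H.
    apply (@is_derive_opp R_AbsRing R_NormedModule) in H.
    replace (Im (F (Ci * phi)%C)) with (opp (Re (F (Ci * phi)%C * Ci)%C))
      by (destruct (F (Ci * phi)%C); unfold Re, Im, Ci, Cmult, opp; simpl; ring).
    revert H. apply is_derive_ext. intros y.
    replace (0 + y * Ci)%C with (Ci * y)%C by ring. reflexivity. }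
  assert (Cn : forall phi, Rmin 0 theta <= phi <= Rmax 0 theta ->
    continuous (fun phi : R => Im (F (Ci * phi)%C)) phi)
    by (intros phi Hphi; apply continuous_Im_imaginary_axis, HLF, Hb, Hphi).
  rewrite (is_RInt_unique _ _ _ _ (@is_RInt_derive R_CompleteNormedModule _ _ 0 theta D Cn)).
  change (- Re (L (Ci * theta)%C) - - Re (L (Ci * 0)%C) = Re (L 0) - Re (L (Ci * theta)%C)).
  replace (Ci * 0)%C with (RtoC 0) by ring. ring.
Qed.

Section LocalEstimate.

Variables (a : nat -> R) (tG : Rbar) (t r e : R) (L : C -> C).
Hypothesis Hs : std_hyp a tG.
Hypothesis Htr : Rbar_lt (t + r) tG.
Hypothesis Hr : 0 < r.
Hypothesis He : 0 < e.
Hypothesis HL0 : L 0 = 0.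
Hypothesis HL : forall tau : C, Cmod tau <= r ->
  ex_derive L tau /\
  cexp (L tau) = (Hfun a (t + tau) / Hfun a t)%C /\
  Cmod (L tau - (tau * Afun a t + / 2 * (tau * tau) * Bfun a t))%C
    <= e * Cmod tau ^ 2 * Re (Bfun a t).

Let A : C := Afun a t.
Let B : C := Bfun a t.

Lemma shift_in_domain (tau : C) : Cmod tau < r -> Rbar_lt (Re (t + tau)) tG.
Proof.
  intros H. apply (Rbar_le_lt_trans _ (t + r)); [| exact Htr].
  change (Re (t + tau)%C <= t + r). rewrite re_plus, re_RtoC.
  pose proof (re_le_Cmod tau). pose proof (Rle_abs (Re tau)). lra.
Qed.

Lemma t_in_domain : Rbar_lt t tG.
Proof. apply (Rbar_le_lt_trans _ (t + r)); [simpl; lra | exact Htr]. Qed.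

Lemma Hfun_t_neq_0 : Hfun a t <> 0%C.
Proof.
  intros E. destruct (HL 0%C ltac:(rewrite Cmod_0; lra)) as [_ [H _]].
  replace (t + 0)%C with (RtoC t) in H by ring.
  rewrite HL0, cexp_0, E in H. unfold Cdiv in H. rewrite Cmult_0_l in H. apply C1_nz, H.
Qed.

Lemma Hfun_shift (tau : C) : Cmod tau < r -> Hfun a (t + tau) = (Hfun a t * cexp (L tau))%C.
Proof.
  intros H. destruct (HL tau ltac:(lra)) as [_ [E _]]. rewrite E. field. apply Hfun_t_neq_0.
Qed.

Lemma Hfun_shift_neq_0 (tau : C) : Cmod tau < r -> Hfun a (t + tau) <> 0%C.
Proof.
  intros H. rewrite Hfun_shift by exact H. apply Cmult_neq_0; [apply Hfun_t_neq_0 | apply cexp_neq_0].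
Qed.

Lemma B_real : Im B = 0.
Proof. apply (Bfun_real a tG Hs t t_in_domain Hfun_t_neq_0). Qed.

(* With [tau = r] the admissibility bound reads [|real number| <= e r^2 Re B]. *)
Lemma Re_B_nonneg : 0 <= Re B.
Proof.
  destruct (HL r ltac:(rewrite Cmod_R, Rabs_right; lra)) as [_ [_ H]].
  rewrite Cmod_R, Rabs_right in H by lra. fold A B in H.
  pose proof (Cmod_ge_0 (L r - (r * A + / 2 * (r * r) * B))%C).
  apply Rnot_lt_le. intros Hn. assert (0 < e * r ^ 2) by (apply Rmult_lt_0_compat; nra). nra.
Qed.

Lemma CDer_L (tau : C) : Cmod tau < r -> CDer L tau (Afun a (t + tau)).
Proof.
  intros Htau. destruct (HL tau ltac:(lra)) as [Hd _].
  pose proof (proj2 (CDer_is_derive _ _ _) (C_derive_correct _ _ 0%C Hd)) as DL.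
  set (L' := C_derive L tau) in DL.
  assert (D1 := CDer_comp (Hfun a) (fun x => t + x)%C tau _ _
                  (CDer_Hfun a tG Hs _ (shift_in_domain tau Htau))
                  (CDer_plus _ _ tau _ _ (CDer_const (RtoC t) tau) (CDer_id tau))).
  assert (D2 : CDer (fun x => Hfun a (t + x)) tau
                 (0 * cexp (L tau) + Hfun a t * (L' * cexp (L tau)))%C).
  { apply (CDer_ext_loc (fun x => Hfun a t * cexp (L x))%C _ _ _ (r - Cmod tau)); [lra | |].
    - intros w Hw. symmetry. apply Hfun_shift.
      pose proof (Cmod_triangle (w - tau) tau). replace (w - tau + tau)%C with w in H by ring. lra.
    - exact (CDer_mult _ _ tau _ _ (CDer_const _ tau) (CDer_comp cexp L tau _ _ (CDer_cexp _) DL)). }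
  pose proof (CDer_unique _ _ _ _ D1 D2) as E. cbv beta in E.
  rewrite (Afun_eq a tG Hs _ (shift_in_domain tau Htau)), (Hfun_shift tau Htau).
  match type of E with (?u * ?X)%C = _ =>
    replace X with (Hfun a t * (L' * cexp (L tau)))%C
      by (transitivity (u * X)%C; [rewrite E | ]; ring)
  end.
  replace (Hfun a t * (L' * cexp (L tau)) / (Hfun a t * cexp (L tau)))%C with L'.
  - exact DL.
  - field. split; [apply cexp_neq_0 | apply Hfun_t_neq_0].
Qed.

Lemma CDer_Afun_shift (tau : C) : Cmod tau < r ->
  CDer (fun x => Afun a (t + x)) tau (Bfun a (t + tau)).
Proof.
  intros H.
  pose proof (CDer_comp (Afun a) (fun x => t + x)%C tau _ _
    (CDer_Afun a tG Hs _ (shift_in_domain tau H) (Hfun_shift_neq_0 tau H))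
    (CDer_plus _ _ tau _ _ (CDer_const (RtoC t) tau) (CDer_id tau))) as D.
  cbv beta in D. replace ((0 + 1) * Bfun a (t + tau))%C with (Bfun a (t + tau)) in D by ring.
  exact D.
Qed.

Let h (tau : C) : C := (L tau - (tau * A + / 2 * (tau * tau) * B))%C.
Let h' (tau : C) : C := (Afun a (t + tau) - A - tau * B)%C.

Lemma CDer_h (tau : C) : Cmod tau < r -> CDer h tau (h' tau).
Proof.
  intros H. unfold h, h'.
  pose proof (CDer_minus _ _ tau _ _ (CDer_L tau H)
    (CDer_plus _ _ tau _ _ (CDer_mult _ _ tau _ _ (CDer_id tau) (CDer_const A tau))
      (CDer_mult _ _ tau _ _ (CDer_mult _ _ tau _ _ (CDer_const (/ 2)%C tau)
         (CDer_mult _ _ tau _ _ (CDer_id tau) (CDer_id tau))) (CDer_const B tau)))) as D.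
  cbv beta in D. match type of D with CDer _ _ ?l =>
    replace l with (Afun a (t + tau) - A - tau * B)%C in D by field end.
  exact D.
Qed.

Lemma ex_CDer_h' (tau : C) : Cmod tau < r -> exists l, CDer h' tau l.
Proof.
  intros H. eexists. unfold h'.
  apply CDer_minus; [apply CDer_minus; [apply CDer_Afun_shift, H | apply CDer_const] |].
  apply CDer_mult; [apply CDer_id | apply CDer_const].
Qed.

Lemma Cmod_h_le (tau : C) : Cmod tau <= r -> Cmod (h tau) <= e * Cmod tau ^ 2 * Re B.
Proof. intros H. apply (HL tau H). Qed.

(* Cauchy estimate on the circle of radius [|theta|] around [i theta]. *)
Lemma Cmod_h'_le (theta : R) : Rabs theta <= r / 4 ->
  Cmod (h' (Ci * theta)%C) <= 8 * e * Re B * Rabs theta.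
Proof.
  intros Hth. pose proof Re_B_nonneg. destruct (Req_dec theta 0) as [-> | Hn].
  { unfold h'. replace (t + Ci * 0)%C with (RtoC t) by ring. fold A.
    replace (A - A - Ci * 0 * B)%C with (RtoC 0) by ring. rewrite Cmod_0, Rabs_R0. lra. }
  pose proof (Rabs_pos_lt _ Hn).
  assert (Hw : forall w, Cmod (w - Ci * theta) <= 2 * Rabs theta -> Cmod w <= 3 * Rabs theta).
  { intros w Hw. pose proof (Cmod_triangle (w - Ci * theta) (Ci * theta)) as Ht.
    rewrite Cmod_Ci_mult in Ht. replace (w - Ci * theta + Ci * theta)%C with w in Ht by ring. lra. }
  apply Rle_trans with (2 * (e * (2 * Rabs theta) ^ 2 * Re B) / Rabs theta); [| right; field; lra].
  apply (Cauchy_estimate h h' (Ci * theta) (Rabs theta) (2 * Rabs theta)); [lra | |].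
  - intros w Hwr. assert (Cmod w < r) by (pose proof (Hw w ltac:(lra)); lra).
    split; [apply CDer_h | apply ex_CDer_h']; auto.
  - intros w Hwr. assert (Hw' : Cmod w <= 2 * Rabs theta).
    { pose proof (Cmod_triangle (w - Ci * theta) (Ci * theta)) as Ht.
      rewrite Cmod_Ci_mult in Ht. replace (w - Ci * theta + Ci * theta)%C with w in Ht by ring. lra. }
    eapply Rle_trans; [apply Cmod_h_le; lra |].
    pose proof (Cmod_ge_0 w). apply Rmult_le_compat_r; [lra |].
    apply Rmult_le_compat_l; [lra | apply pow_incr; lra].
Qed.

Lemma RInt_Im_Afun_shift (theta : R) : Rabs theta < r ->
  RInt (fun phi => Im (Afun a (t + Ci * phi)%C)) 0 theta
    = theta ^ 2 * Re B / 2 - Re (h (Ci * theta)%C).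
Proof.
  intros Hth. rewrite (RInt_Im_imaginary_axis L (fun x => Afun a (t + x)) r theta).
  - rewrite HL0. unfold h.
    pose proof (Afun_real a tG Hs t t_in_domain) as HA. pose proof B_real as HB. fold A in HA.
    destruct A as [a1 a2], B as [b1 b2]. unfold Re, Im in *; simpl in *. subst. field.
  - intros tau Htau. split; [apply CDer_L, Htau |].
    apply (CDer_ccont _ _ _ (CDer_Afun_shift tau Htau)).
  - exact Hth.
Qed.

Lemma Rabs_Re_h_le (theta : R) : Rabs theta <= r ->
  Rabs (Re (h (Ci * theta)%C)) <= e * theta ^ 2 * Re B.
Proof.
  intros Hth. eapply Rle_trans; [apply re_le_Cmod |].
  rewrite <- (pow2_abs theta), <- (Cmod_Ci_mult theta). apply Cmod_h_le. rewrite Cmod_Ci_mult. exact Hth.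
Qed.

Lemma local_estimate (theta : R) : Rabs theta <= r / 4 ->
  (1 - 8 * e) * Re B * Rabs theta <= Cmod (Afun a (t + Ci * theta)%C - A)
  /\ Cmod (Afun a (t + Ci * theta)%C - A) <= (1 + 8 * e) * Re B * Rabs theta
  /\ (1 - 8 * e) / 2 * theta ^ 2 * Re B
       <= RInt (fun phi => Im (Afun a (t + Ci * phi)%C)) 0 theta
  /\ RInt (fun phi => Im (Afun a (t + Ci * phi)%C)) 0 theta <= (1 + 8 * e) / 2 * theta ^ 2 * Re B.
Proof.
  intros Hth. pose proof Re_B_nonneg. pose proof (Rabs_pos theta).
  pose proof (Cmod_h'_le theta Hth) as Hh'.
  pose proof (proj1 (Rabs_le_between _ _) (Rabs_Re_h_le theta ltac:(lra))) as Hh.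
  assert (HiB : Cmod (Ci * theta * B)%C = Re B * Rabs theta)
    by (rewrite Cmod_mult, Cmod_Ci_mult, (Cmod_real_nonneg B B_real); lra).
  assert (E1 : (Afun a (t + Ci * theta)%C - A)%C = (Ci * theta * B + h' (Ci * theta))%C)
    by (unfold h'; ring).
  assert (0 <= e * theta ^ 2 * Re B) by (pose proof (pow2_ge_0 theta); apply Rmult_le_pos; nra).
  assert (0 <= e * Re B * Rabs theta) by (apply Rmult_le_pos; nra).
  pose proof (Cmod_triangle (Ci * theta * B) (h' (Ci * theta))) as Hup.
  pose proof (Cmod_sub_le (Ci * theta * B) (- h' (Ci * theta))) as Hlow.
  rewrite Cmod_opp in Hlow.
  replace (Ci * theta * B - - h' (Ci * theta))%C with (Ci * theta * B + h' (Ci * theta))%C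
    in Hlow by ring.
  rewrite E1, RInt_Im_Afun_shift by lra. repeat split; lra.
Qed.

End LocalEstimate.

Theorem lemma2p3 (a : nat -> R) (tG : Rbar) (T : R -> Prop) (delta : R -> R) :
  std_hyp a tG ->
  (forall t : R, T t -> Rbar_lt (Finite t) tG) ->
  local_delta_admissible a tG T delta ->
  forall eps, 0 < eps ->
    exists eta, 0 < eta /\
    exists t0 : R, Rbar_lt (Finite t0) tG /\
    forall t : R, T t -> t0 < t ->
    forall theta : R, Rabs theta <= eta / 2 * delta t ->
      (1 - eps) * Re (Bfun a (RtoC t)) * Rabs theta
        <= Cmod (Afun a (Cplus (RtoC t) (Cmult Ci (RtoC theta))) - Afun a (RtoC t))
      /\ Cmod (Afun a (Cplus (RtoC t) (Cmult Ci (RtoC theta))) - Afun a (RtoC t))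
        <= (1 + eps) * Re (Bfun a (RtoC t)) * Rabs theta
      /\ (1 - eps) / 2 * theta ^ 2 * Re (Bfun a (RtoC t))
        <= RInt (fun phi => Im (Afun a (Cplus (RtoC t) (Cmult Ci (RtoC phi))))) 0 theta
      /\ RInt (fun phi => Im (Afun a (Cplus (RtoC t) (Cmult Ci (RtoC phi))))) 0 theta
        <= (1 + eps) / 2 * theta ^ 2 * Re (Bfun a (RtoC t)).
Proof.
  intros Hs HT [Hdelta Hadm] eps Heps.
  destruct (Hadm (eps / 8) ltac:(lra)) as [eta [Heta [t0 [Ht0 Hmain]]]].
  pose proof (Rmin_l eta 1). pose proof (Rmin_r eta 1).
  assert (Hm : 0 < Rmin eta 1) by (apply Rmin_pos; lra).
  exists (Rmin eta 1 / 2). split; [lra |]. exists t0. split; [exact Ht0 |].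
  intros t HTt Htt0 theta Htheta.
  destruct (Hdelta t (HT t HTt)) as [[Hd0 _] Hdt].
  destruct (Hmain t HTt Htt0 (HT t HTt)) as [L [HL0 HL]].
  set (r := Rmin eta 1 * delta t).
  assert (Hr : 0 < r) by (apply Rmult_lt_0_compat; lra).
  assert (Htr : Rbar_lt (t + r) tG).
  { apply (Rbar_le_lt_trans _ (t + delta t)); [simpl | exact Hdt].
    assert (r <= 1 * delta t) by (apply Rmult_le_compat_r; lra). lra. }
  assert (HLr : forall tau : C, Cmod tau <= r ->
    ex_derive L tau /\
    cexp (L tau) = (Hfun a (t + tau) / Hfun a t)%C /\
    Cmod (L tau - (tau * Afun a t + / 2 * (tau * tau) * Bfun a t))%C
      <= eps / 8 * Cmod tau ^ 2 * Re (Bfun a t))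
    by (intros tau Htau; apply HL; eapply Rle_trans; [exact Htau | apply Rmult_le_compat_r; lra]).
  replace eps with (8 * (eps / 8)) by field.
  apply (local_estimate a tG t r (eps / 8) L Hs Htr Hr ltac:(lra) HL0 HLr).
  unfold r. lra.
Qed.
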